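(* There exists a $(121,11;9)$ Heffter net over the additive group of $\mathbb F_{3^5}$.
   Context: A half-set of an abelian group $G$ of odd order $2v+1\ge7$ is a subset $V\subseteq G\setminus\{0\}$ containing exactly one element of each pair $\{g,-g\}$, $g\ne0$. A $(v,k)$ Heffter system on $V$ is a partition of $V$ into blocks of size $k$ each summing to $0$ in $G$. A $(k^2,k;r)$ Heffter net over $G$ (with $|G|=2k^2+1$) is a partial linear space (any two distinct points lie in at most one block) whose point set is a half-set $V$ of $G$, with a resolution of its blocks into $r$ parallel classes (each a partition of $V$), each of which is a $(k^2,k)$ Heffter system. *)

From HB Require Import structures.
From mathcomp Require Import all_boot all_order all_algebra all_field.
Set Warnings "-notation-overridden,-ambiguous-paths".

Set Implicit Arguments. Unset Strict Implicit. Unset Printing Implicit Defensive.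
Import GRing.Theory.
Local Open Scope ring_scope.

Definition half_set (G : finZmodType) (V : {set G}) : Prop :=
  0 \notin V /\ forall g : G, g != 0 -> (g \in V) != (- g \in V).

(* A (v,k) Heffter system on V: a partition of V into blocks of size k,
   each summing to 0 in G (v = #|V| is determined by V). *)
Definition heffter_system (G : finZmodType) (V : {set G}) (k : nat)
    (P : {set {set G}}) : Prop :=
  partition P V /\
  forall B, B \in P -> #|B| = k /\ \sum_(x in B) x = 0.

(* A (k^2,k;r) Heffter net over G: a half-set V of G (with |G| = 2k^2+1)
   together with r parallel classes P 0, ..., P (r-1), each a (k^2,k)
   Heffter system on V; the blocks (i, B) with B in P i form a partial
   linear space: two distinct points lie in at most one block (blocks are
   counted with their class, so distinct classes share no block). *)
Definition heffter_net (G : finZmodType) (k r : nat) (V : {set G})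
    (P : 'I_r -> {set {set G}}) : Prop :=
  #|G| = (2 * k ^ 2 + 1)%N /\
  half_set V /\
  (forall i, heffter_system V k (P i)) /\
  (forall (i j : 'I_r) (B B' : {set G}) (x y : G),
      B \in P i -> B' \in P j -> x != y ->
      x \in B -> y \in B -> x \in B' -> y \in B' ->
      i = j /\ B = B').

Definition has_heffter_net (G : finZmodType) (k r : nat) : Prop :=
  exists (V : {set G}) (P : 'I_r -> {set {set G}}), @heffter_net G k r V P.

From HB Require Import structures.
From mathcomp Require Import all_boot all_order all_algebra all_field.
Set Implicit Arguments. Unset Strict Implicit. Unset Printing Implicit Defensive.
Import GRing.Theory.
Local Open Scope ring_scope.

(* The additive group of a field of order 3^5 is isomorphic to F_3^5, so it suffices
   to exhibit one net over F_3^5 and carry it along an additive bijection.  The net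
   is given explicitly as nine lists of eleven blocks; its half-set is the
   union of the blocks of the first class, and every defining property reduces to a
   finite check on these lists, decided by computation. *)

Lemma uniq_flatten_mem (T : eqType) (ss : seq (seq T)) s :
  uniq (flatten ss) -> s \in ss -> uniq s.
Proof.
elim: ss => [|s1 ss IH] //=; rewrite cat_uniq => /and3P[us1 _ uss].
by rewrite inE => /predU1P[->|/IH]; last exact.
Qed.

Lemma uniq_flatten_mem_eq (T : eqType) (ss : seq (seq T)) s1 s2 x :
  uniq (flatten ss) -> s1 \in ss -> s2 \in ss -> x \in s1 -> x \in s2 -> s1 = s2.
Proof.
elim: ss => [|s ss IH] //=; rewrite cat_uniq => /and3P[_ dis uss].
have xs_out s' : s' \in ss -> x \in s' -> x \notin s.
  move=> s'ss xs'; apply: contraNN dis => xs.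
  by apply/hasP; exists x => //; apply/flattenP; exists s'.
rewrite !inE => /predU1P[->|s1ss] /predU1P[->|s2ss] // xs1 xs2.
- by have := xs_out s2 s2ss xs2; rewrite xs1.
- by have := xs_out s1 s1ss xs1; rewrite xs2.
- exact: IH.
Qed.

Lemma count_le1_eq (T : eqType) (a : pred T) (s : seq T) x y :
  (count a s <= 1)%N -> x \in s -> y \in s -> a x -> a y -> x = y.
Proof.
move=> + xs ys ax ay; apply: contraTeq => neq; rewrite -ltnNge -size_filter.
apply: (@uniq_leq_size _ [:: x; y]); first by rewrite /= inE neq.
by apply/allP; rewrite /= !mem_filter ax ay xs ys.
Qed.

Definition blocks_of (T : finType) (cl : seq (seq T)) : {set {set T}} :=
  [set B in [seq [set x in b] | b <- cl]].

Lemma partition_blocks_of (T : finType) (cl : seq (seq T)) (A : {set T}) :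
  uniq (flatten cl) -> flatten cl =i A -> [::] \notin cl -> partition (blocks_of cl) A.
Proof.
move=> ucl covA nil_out; apply/and3P; split.
- apply/eqP/setP => x; rewrite -covA; apply/bigcupP/flattenP => [[B]|[b bcl xb]].
    by rewrite inE => /mapP[b bcl ->]; rewrite inE => xb; exists b.
  by exists [set x in b]; rewrite !inE ?map_f.
- apply/trivIsetP => B1 B2 /[!inE] /mapP[b1 b1cl ->] /mapP[b2 b2cl ->] neq.
  rewrite -setI_eq0; apply/eqP/setP => x; rewrite !inE.
  apply/negbTE/andP => -[xb1 xb2].
  by rewrite (uniq_flatten_mem_eq ucl b1cl b2cl xb1 xb2) eqxx in neq.
- rewrite inE; apply/mapP => -[[|x b] bcl] e; first by rewrite bcl in nil_out.
  by have := in_set0 x; rewrite e inE mem_head.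
Qed.

Section HeffterNetOfSeqs.
Variables (G : finZmodType) (k r : nat) (V : seq G) (cls : 'I_r -> seq (seq G)).
Hypothesis card_G : #|G| = (2 * k ^ 2 + 1)%N.
Hypothesis V0 : 0 \notin V.
Hypothesis V_half : forall x, x != 0 -> (x \in V) != (- x \in V).
Hypothesis k_gt0 : (0 < k)%N.
Hypothesis size_block : forall i b, b \in cls i -> size b = k.
Hypothesis sum_block : forall i b, b \in cls i -> \sum_(x <- b) x = 0.
Hypothesis uniq_class : forall i, uniq (flatten (cls i)).
Hypothesis cover_class : forall i, flatten (cls i) =i V.
Hypothesis meet_blocks : forall i j b b' x y, b \in cls i -> b' \in cls j ->
  (i, b) != (j, b') -> x \in b -> y \in b -> x \in b' -> y \in b' -> x = y.

Lemma heffter_system_blocks_of i : heffter_system [set x in V] k (blocks_of (cls i)).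
Proof.
split.
  apply: partition_blocks_of => [|x|]; first exact: uniq_class.
    by rewrite inE cover_class.
  by apply/negP => /size_block k0; move: k_gt0; rewrite -k0.
move=> _ /[!inE] /mapP[b bi ->].
have ub := uniq_flatten_mem (uniq_class i) bi.
split; first by rewrite cardsE (card_uniqP ub) (size_block bi).
by rewrite (eq_bigl (mem b)) => [|x]; rewrite ?inE // -big_uniq // (sum_block bi).
Qed.

Lemma heffter_net_of_seqs :
  heffter_net k [set x in V] (fun i => blocks_of (cls i)).
Proof.
split=> //; split; first by split=> [|x]; rewrite !inE // => /V_half.
split=> [i|i j B B' x y]; first exact: heffter_system_blocks_of.
rewrite !inE => /mapP[b bi ->] /mapP[b' bj ->] nxy; rewrite !inE => xb yb xb' yb'.
have [[-> ->] //|neq] := eqVneq (i, b) (j, b').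
by rewrite (meet_blocks bi bj neq xb yb xb' yb') eqxx in nxy.
Qed.

End HeffterNetOfSeqs.

Definition code := seq 'F_3.

Definition valid_code (c : code) := size c == 5%N.

Definition row_of_code (c : code) : 'rV['F_3]_5 := \row_k c`_k.

Lemma row_of_code_inj : {in valid_code &, injective row_of_code}.
Proof.
move=> c d /eqP sc /eqP sd e; apply: (@eq_from_nth _ 0); first by rewrite sc sd.
move=> i; rewrite sc => lti.
by have := congr1 (fun u : 'rV_5 => u 0 (Ordinal lti)) e; rewrite !mxE.
Qed.

Lemma row_of_code_surj (u : 'rV['F_3]_5) : exists2 c, valid_code c & row_of_code c = u.
Proof.
exists [seq u 0 k | k <- enum 'I_5]; first by rewrite /valid_code size_map size_enum_ord.
by apply/rowP => k; rewrite mxE (nth_map ord0) ?size_enum_ord // nth_ord_enum.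
Qed.

Lemma row_of_codeN c : row_of_code (map -%R c) = - row_of_code c.
Proof.
apply/rowP => k; rewrite !mxE; have [ltk|gek] := ltnP k (size c).
  by rewrite (nth_map 0).
by rewrite !nth_default ?size_map ?oppr0.
Qed.

Lemma row_of_code0 : row_of_code (nseq 5 0) = 0.
Proof. by apply/rowP => k; rewrite !mxE nth_nseq if_same. Qed.

(* Coordinatewise [foldr] rather than [\sum], so that the check reduces under
   [vm_compute]. *)
Definition sums_to_zero (b : seq code) :=
  all (fun k => foldr +%R 0 [seq c`_k | c <- b] == 0) (iota 0 5).

Lemma sum_row_of_code b : sums_to_zero b -> \sum_(c <- b) row_of_code c = 0.
Proof.
move=> /allP b0; apply/rowP => k; rewrite summxE mxE.
under eq_bigr do rewrite mxE.
rewrite -(big_map (nth 0 ^~ k) xpredT id) -foldrE.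
by apply/eqP/b0; rewrite mem_iota ltn_ord.
Qed.

(* The elements of 'F_3 are listed as [i%:R]: [enum 'F_3] does not reduce under
   [vm_compute]. *)
Fixpoint all_codes n : seq code :=
  if n is n'.+1 then [seq a :: c | a <- [seq i%:R | i <- iota 0 3], c <- all_codes n']
  else [:: [::]].

Lemma mem_all_codes c : c \in all_codes (size c).
Proof.
elim: c => [|a c IH] //; apply: (allpairs_f (fun a c => a :: c) _ IH).
by rewrite -[a]natr_Zp map_f // mem_iota ltn_ord.
Qed.

(* Points of F_3^5 are written by their coordinates in {0, 1, 2}. *)
Definition net_digits : seq (seq (seq (seq nat))) := [::
  [::[::[::1;2;2;2;0];[::0;1;2;1;0];[::1;1;1;1;2];[::0;2;2;2;1];[::1;0;0;1;2];[::0;1;2;1;2];[::2;0;1;1;0];[::0;1;2;0;0];[::0;1;1;0;1];[::2;2;0;1;1];[::2;1;2;2;0]];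
    [::[::2;1;1;2;0];[::1;2;1;0;1];[::0;2;1;0;1];[::2;0;2;0;1];[::1;2;0;1;0];[::2;1;0;2;1];[::0;0;0;1;1];[::0;1;0;1;0];[::1;1;2;0;1];[::0;1;0;0;0];[::0;1;2;2;0]];
    [::[::2;0;1;0;0];[::2;1;2;2;2];[::2;1;2;2;1];[::0;0;2;2;2];[::0;2;2;0;1];[::2;0;0;2;0];[::1;1;1;2;2];[::1;2;2;0;2];[::2;0;2;2;2];[::2;0;0;0;1];[::1;2;1;0;2]];
    [::[::0;1;0;1;1];[::0;2;2;0;0];[::0;2;0;2;1];[::1;0;1;0;1];[::0;0;0;2;1];[::1;1;0;2;1];[::2;1;1;1;1];[::2;0;1;2;2];[::2;0;2;1;2];[::1;0;0;2;0];[::0;2;2;2;2]];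
    [::[::0;1;2;2;1];[::1;2;1;2;2];[::1;0;1;2;2];[::1;1;0;1;2];[::0;2;1;0;2];[::1;1;2;0;0];[::1;0;0;0;1];[::0;0;2;0;2];[::1;2;2;1;2];[::0;0;2;0;0];[::0;0;2;1;1]];
    [::[::2;1;0;1;2];[::1;1;0;0;2];[::2;2;1;2;1];[::0;1;0;2;0];[::2;1;2;1;2];[::1;1;2;1;0];[::2;0;0;1;2];[::1;0;1;1;2];[::0;1;0;0;1];[::2;2;2;2;2];[::2;2;1;1;1]];
    [::[::1;2;2;1;1];[::1;2;2;0;1];[::0;2;2;2;0];[::2;2;0;1;0];[::0;0;2;2;1];[::1;1;2;0;2];[::2;2;0;0;2];[::0;2;2;1;1];[::0;0;0;0;1];[::2;1;0;0;2];[::0;1;0;2;1]];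
    [::[::1;2;0;0;2];[::2;0;0;1;1];[::2;2;1;1;0];[::0;0;0;1;0];[::1;0;0;1;1];[::1;0;2;1;0];[::2;2;1;2;2];[::2;2;0;2;2];[::2;2;2;0;0];[::2;0;1;2;1];[::0;2;2;1;0]];
    [::[::1;0;0;0;0];[::1;2;2;0;0];[::1;1;2;2;1];[::2;1;0;2;2];[::2;1;0;1;0];[::0;2;0;0;1];[::2;0;1;1;2];[::1;0;2;0;1];[::0;0;1;1;0];[::1;0;1;0;0];[::1;2;0;2;2]];
    [::[::1;1;0;0;0];[::1;0;1;2;0];[::0;2;0;1;1];[::0;0;1;2;0];[::2;0;1;1;1];[::2;2;2;0;2];[::0;2;1;2;2];[::0;1;2;2;2];[::0;0;1;2;1];[::1;1;1;1;0];[::2;0;2;2;0]];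
    [::[::1;1;1;0;2];[::2;2;2;1;0];[::0;0;1;0;2];[::1;2;1;2;0];[::0;1;1;2;1];[::1;2;0;0;0];[::1;1;0;1;0];[::2;0;1;0;1];[::1;2;2;2;1];[::2;2;2;1;2];[::1;2;1;0;0]]];
  [::[::[::1;2;2;2;0];[::2;1;1;2;0];[::2;0;1;0;0];[::0;1;0;1;1];[::0;1;2;2;1];[::2;1;0;1;2];[::1;2;2;1;1];[::1;2;0;0;2];[::1;0;0;0;0];[::1;1;0;0;0];[::1;1;1;0;2]];
    [::[::0;1;2;1;0];[::1;2;1;0;1];[::2;1;2;2;2];[::0;2;2;0;0];[::1;2;1;2;2];[::1;1;0;0;2];[::1;2;2;0;1];[::2;0;0;1;1];[::1;2;2;0;0];[::1;0;1;2;0];[::2;2;2;1;0]];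
    [::[::1;1;1;1;2];[::0;2;1;0;1];[::2;1;2;2;1];[::0;2;0;2;1];[::1;0;1;2;2];[::2;2;1;2;1];[::0;2;2;2;0];[::2;2;1;1;0];[::1;1;2;2;1];[::0;2;0;1;1];[::0;0;1;0;2]];
    [::[::0;2;2;2;1];[::2;0;2;0;1];[::0;0;2;2;2];[::1;0;1;0;1];[::1;1;0;1;2];[::0;1;0;2;0];[::2;2;0;1;0];[::0;0;0;1;0];[::2;1;0;2;2];[::0;0;1;2;0];[::1;2;1;2;0]];
    [::[::1;0;0;1;2];[::1;2;0;1;0];[::0;2;2;0;1];[::0;0;0;2;1];[::0;2;1;0;2];[::2;1;2;1;2];[::0;0;2;2;1];[::1;0;0;1;1];[::2;1;0;1;0];[::2;0;1;1;1];[::0;1;1;2;1]];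
    [::[::0;1;2;1;2];[::2;1;0;2;1];[::2;0;0;2;0];[::1;1;0;2;1];[::1;1;2;0;0];[::1;1;2;1;0];[::1;1;2;0;2];[::1;0;2;1;0];[::0;2;0;0;1];[::2;2;2;0;2];[::1;2;0;0;0]];
    [::[::2;0;1;1;0];[::0;0;0;1;1];[::1;1;1;2;2];[::2;1;1;1;1];[::1;0;0;0;1];[::2;0;0;1;2];[::2;2;0;0;2];[::2;2;1;2;2];[::2;0;1;1;2];[::0;2;1;2;2];[::1;1;0;1;0]];
    [::[::0;1;2;0;0];[::0;1;0;1;0];[::1;2;2;0;2];[::2;0;1;2;2];[::0;0;2;0;2];[::1;0;1;1;2];[::0;2;2;1;1];[::2;2;0;2;2];[::1;0;2;0;1];[::0;1;2;2;2];[::2;0;1;0;1]];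
    [::[::0;1;1;0;1];[::1;1;2;0;1];[::2;0;2;2;2];[::2;0;2;1;2];[::1;2;2;1;2];[::0;1;0;0;1];[::0;0;0;0;1];[::2;2;2;0;0];[::0;0;1;1;0];[::0;0;1;2;1];[::1;2;2;2;1]];
    [::[::2;2;0;1;1];[::0;1;0;0;0];[::2;0;0;0;1];[::1;0;0;2;0];[::0;0;2;0;0];[::2;2;2;2;2];[::2;1;0;0;2];[::2;0;1;2;1];[::1;0;1;0;0];[::1;1;1;1;0];[::2;2;2;1;2]];
    [::[::2;1;2;2;0];[::0;1;2;2;0];[::1;2;1;0;2];[::0;2;2;2;2];[::0;0;2;1;1];[::2;2;1;1;1];[::0;1;0;2;1];[::0;2;2;1;0];[::1;2;0;2;2];[::2;0;2;2;0];[::1;2;1;0;0]]];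
  [::[::[::1;2;2;2;0];[::1;2;1;0;1];[::2;1;2;2;1];[::1;0;1;0;1];[::0;2;1;0;2];[::1;1;2;1;0];[::2;2;0;0;2];[::2;2;0;2;2];[::0;0;1;1;0];[::1;1;1;1;0];[::1;2;1;0;0]];
    [::[::0;1;2;1;0];[::0;2;1;0;1];[::0;0;2;2;2];[::0;0;0;2;1];[::1;1;2;0;0];[::2;0;0;1;2];[::0;2;2;1;1];[::2;2;2;0;0];[::1;0;1;0;0];[::2;0;2;2;0];[::1;1;1;0;2]];
    [::[::1;1;1;1;2];[::2;0;2;0;1];[::0;2;2;0;1];[::1;1;0;2;1];[::1;0;0;0;1];[::1;0;1;1;2];[::0;0;0;0;1];[::2;0;1;2;1];[::1;2;0;2;2];[::1;1;0;0;0];[::2;2;2;1;0]];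
    [::[::0;2;2;2;1];[::1;2;0;1;0];[::2;0;0;2;0];[::2;1;1;1;1];[::0;0;2;0;2];[::0;1;0;0;1];[::2;1;0;0;2];[::0;2;2;1;0];[::1;0;0;0;0];[::1;0;1;2;0];[::0;0;1;0;2]];
    [::[::1;0;0;1;2];[::2;1;0;2;1];[::1;1;1;2;2];[::2;0;1;2;2];[::1;2;2;1;2];[::2;2;2;2;2];[::0;1;0;2;1];[::1;2;0;0;2];[::1;2;2;0;0];[::0;2;0;1;1];[::1;2;1;2;0]];
    [::[::0;1;2;1;2];[::0;0;0;1;1];[::1;2;2;0;2];[::2;0;2;1;2];[::0;0;2;0;0];[::2;2;1;1;1];[::1;2;2;1;1];[::2;0;0;1;1];[::1;1;2;2;1];[::0;0;1;2;0];[::0;1;1;2;1]];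
    [::[::2;0;1;1;0];[::0;1;0;1;0];[::2;0;2;2;2];[::1;0;0;2;0];[::0;0;2;1;1];[::2;1;0;1;2];[::1;2;2;0;1];[::2;2;1;1;0];[::2;1;0;2;2];[::2;0;1;1;1];[::1;2;0;0;0]];
    [::[::0;1;2;0;0];[::1;1;2;0;1];[::2;0;0;0;1];[::0;2;2;2;2];[::0;1;2;2;1];[::1;1;0;0;2];[::0;2;2;2;0];[::0;0;0;1;0];[::2;1;0;1;0];[::2;2;2;0;2];[::1;1;0;1;0]];
    [::[::0;1;1;0;1];[::0;1;0;0;0];[::1;2;1;0;2];[::0;1;0;1;1];[::1;2;1;2;2];[::2;2;1;2;1];[::2;2;0;1;0];[::1;0;0;1;1];[::0;2;0;0;1];[::0;2;1;2;2];[::2;0;1;0;1]];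
    [::[::2;2;0;1;1];[::0;1;2;2;0];[::2;0;1;0;0];[::0;2;2;0;0];[::1;0;1;2;2];[::0;1;0;2;0];[::0;0;2;2;1];[::1;0;2;1;0];[::2;0;1;1;2];[::0;1;2;2;2];[::1;2;2;2;1]];
    [::[::2;1;2;2;0];[::2;1;1;2;0];[::2;1;2;2;2];[::0;2;0;2;1];[::1;1;0;1;2];[::2;1;2;1;2];[::1;1;2;0;2];[::2;2;1;2;2];[::1;0;2;0;1];[::0;0;1;2;1];[::2;2;2;1;2]]];
  [::[::[::1;2;2;2;0];[::0;2;1;0;1];[::0;2;2;0;1];[::2;1;1;1;1];[::1;2;2;1;2];[::2;2;1;1;1];[::1;2;2;0;1];[::0;0;0;1;0];[::0;2;0;0;1];[::0;1;2;2;2];[::2;2;2;1;2]];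
    [::[::0;1;2;1;0];[::2;0;2;0;1];[::2;0;0;2;0];[::2;0;1;2;2];[::0;0;2;0;0];[::2;1;0;1;2];[::0;2;2;2;0];[::1;0;0;1;1];[::2;0;1;1;2];[::0;0;1;2;1];[::1;2;1;0;0]];
    [::[::1;1;1;1;2];[::1;2;0;1;0];[::1;1;1;2;2];[::2;0;2;1;2];[::0;0;2;1;1];[::1;1;0;0;2];[::2;2;0;1;0];[::1;0;2;1;0];[::1;0;2;0;1];[::1;1;1;1;0];[::1;1;1;0;2]];
    [::[::0;2;2;2;1];[::2;1;0;2;1];[::1;2;2;0;2];[::1;0;0;2;0];[::0;1;2;2;1];[::2;2;1;2;1];[::0;0;2;2;1];[::2;2;1;2;2];[::0;0;1;1;0];[::2;0;2;2;0];[::2;2;2;1;0]];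
    [::[::1;0;0;1;2];[::0;0;0;1;1];[::2;0;2;2;2];[::0;2;2;2;2];[::1;2;1;2;2];[::0;1;0;2;0];[::1;1;2;0;2];[::2;2;0;2;2];[::1;0;1;0;0];[::1;1;0;0;0];[::0;0;1;0;2]];
    [::[::0;1;2;1;2];[::0;1;0;1;0];[::2;0;0;0;1];[::0;1;0;1;1];[::1;0;1;2;2];[::2;1;2;1;2];[::2;2;0;0;2];[::2;2;2;0;0];[::1;2;0;2;2];[::1;0;1;2;0];[::1;2;1;2;0]];
    [::[::2;0;1;1;0];[::1;1;2;0;1];[::1;2;1;0;2];[::0;2;2;0;0];[::1;1;0;1;2];[::1;1;2;1;0];[::0;2;2;1;1];[::2;0;1;2;1];[::1;0;0;0;0];[::0;2;0;1;1];[::0;1;1;2;1]];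
    [::[::0;1;2;0;0];[::0;1;0;0;0];[::2;0;1;0;0];[::0;2;0;2;1];[::0;2;1;0;2];[::2;0;0;1;2];[::0;0;0;0;1];[::0;2;2;1;0];[::1;2;2;0;0];[::0;0;1;2;0];[::1;2;0;0;0]];
    [::[::0;1;1;0;1];[::0;1;2;2;0];[::2;1;2;2;2];[::1;0;1;0;1];[::1;1;2;0;0];[::1;0;1;1;2];[::2;1;0;0;2];[::1;2;0;0;2];[::1;1;2;2;1];[::2;0;1;1;1];[::1;1;0;1;0]];
    [::[::2;2;0;1;1];[::2;1;1;2;0];[::2;1;2;2;1];[::0;0;0;2;1];[::1;0;0;0;1];[::0;1;0;0;1];[::0;1;0;2;1];[::2;0;0;1;1];[::2;1;0;2;2];[::2;2;2;0;2];[::2;0;1;0;1]];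
    [::[::2;1;2;2;0];[::1;2;1;0;1];[::0;0;2;2;2];[::1;1;0;2;1];[::0;0;2;0;2];[::2;2;2;2;2];[::1;2;2;1;1];[::2;2;1;1;0];[::2;1;0;1;0];[::0;2;1;2;2];[::1;2;2;2;1]]];
  [::[::[::1;2;2;2;0];[::2;0;2;0;1];[::1;1;1;2;2];[::1;0;0;2;0];[::1;2;1;2;2];[::2;1;2;1;2];[::0;2;2;1;1];[::0;2;2;1;0];[::1;1;2;2;1];[::2;2;2;0;2];[::1;2;2;2;1]];
    [::[::0;1;2;1;0];[::1;2;0;1;0];[::1;2;2;0;2];[::0;2;2;2;2];[::1;0;1;2;2];[::1;1;2;1;0];[::0;0;0;0;1];[::1;2;0;0;2];[::2;1;0;2;2];[::0;2;1;2;2];[::2;2;2;1;2]];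
    [::[::1;1;1;1;2];[::2;1;0;2;1];[::2;0;2;2;2];[::0;1;0;1;1];[::1;1;0;1;2];[::2;0;0;1;2];[::2;1;0;0;2];[::2;0;0;1;1];[::2;1;0;1;0];[::0;1;2;2;2];[::1;2;1;0;0]];
    [::[::0;2;2;2;1];[::0;0;0;1;1];[::2;0;0;0;1];[::0;2;2;0;0];[::0;2;1;0;2];[::1;0;1;1;2];[::0;1;0;2;1];[::2;2;1;1;0];[::0;2;0;0;1];[::0;0;1;2;1];[::1;1;1;0;2]];
    [::[::1;0;0;1;2];[::0;1;0;1;0];[::1;2;1;0;2];[::0;2;0;2;1];[::1;1;2;0;0];[::0;1;0;0;1];[::1;2;2;1;1];[::0;0;0;1;0];[::2;0;1;1;2];[::1;1;1;1;0];[::2;2;2;1;0]];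
    [::[::0;1;2;1;2];[::1;1;2;0;1];[::2;0;1;0;0];[::1;0;1;0;1];[::1;0;0;0;1];[::2;2;2;2;2];[::1;2;2;0;1];[::1;0;0;1;1];[::1;0;2;0;1];[::2;0;2;2;0];[::0;0;1;0;2]];
    [::[::2;0;1;1;0];[::0;1;0;0;0];[::2;1;2;2;2];[::0;0;0;2;1];[::0;0;2;0;2];[::2;2;1;1;1];[::0;2;2;2;0];[::1;0;2;1;0];[::0;0;1;1;0];[::1;1;0;0;0];[::1;2;1;2;0]];
    [::[::0;1;2;0;0];[::0;1;2;2;0];[::2;1;2;2;1];[::1;1;0;2;1];[::1;2;2;1;2];[::2;1;0;1;2];[::2;2;0;1;0];[::2;2;1;2;2];[::1;0;1;0;0];[::1;0;1;2;0];[::0;1;1;2;1]];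
    [::[::0;1;1;0;1];[::2;1;1;2;0];[::0;0;2;2;2];[::2;1;1;1;1];[::0;0;2;0;0];[::1;1;0;0;2];[::0;0;2;2;1];[::2;2;0;2;2];[::1;2;0;2;2];[::0;2;0;1;1];[::1;2;0;0;0]];
    [::[::2;2;0;1;1];[::1;2;1;0;1];[::0;2;2;0;1];[::2;0;1;2;2];[::0;0;2;1;1];[::2;2;1;2;1];[::1;1;2;0;2];[::2;2;2;0;0];[::1;0;0;0;0];[::0;0;1;2;0];[::1;1;0;1;0]];
    [::[::2;1;2;2;0];[::0;2;1;0;1];[::2;0;0;2;0];[::2;0;2;1;2];[::0;1;2;2;1];[::0;1;0;2;0];[::2;2;0;0;2];[::2;0;1;2;1];[::1;2;2;0;0];[::2;0;1;1;1];[::2;0;1;0;1]]];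
  [::[::[::1;2;2;2;0];[::1;2;0;1;0];[::2;0;2;2;2];[::0;2;2;0;0];[::1;1;2;0;0];[::2;2;2;2;2];[::0;2;2;2;0];[::2;2;1;2;2];[::1;2;0;2;2];[::0;0;1;2;0];[::2;0;1;0;1]];
    [::[::0;1;2;1;0];[::2;1;0;2;1];[::2;0;0;0;1];[::0;2;0;2;1];[::1;0;0;0;1];[::2;2;1;1;1];[::2;2;0;1;0];[::2;2;0;2;2];[::1;0;0;0;0];[::2;0;1;1;1];[::1;2;2;2;1]];
    [::[::1;1;1;1;2];[::0;0;0;1;1];[::1;2;1;0;2];[::1;0;1;0;1];[::0;0;2;0;2];[::2;1;0;1;2];[::0;0;2;2;1];[::2;2;2;0;0];[::1;2;2;0;0];[::2;2;2;0;2];[::2;2;2;1;2]];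
    [::[::0;2;2;2;1];[::0;1;0;1;0];[::2;0;1;0;0];[::0;0;0;2;1];[::1;2;2;1;2];[::1;1;0;0;2];[::1;1;2;0;2];[::2;0;1;2;1];[::1;1;2;2;1];[::0;2;1;2;2];[::1;2;1;0;0]];
    [::[::1;0;0;1;2];[::1;1;2;0;1];[::2;1;2;2;2];[::1;1;0;2;1];[::0;0;2;0;0];[::2;2;1;2;1];[::2;2;0;0;2];[::0;2;2;1;0];[::2;1;0;2;2];[::0;1;2;2;2];[::1;1;1;0;2]];
    [::[::0;1;2;1;2];[::0;1;0;0;0];[::2;1;2;2;1];[::2;1;1;1;1];[::0;0;2;1;1];[::0;1;0;2;0];[::0;2;2;1;1];[::1;2;0;0;2];[::2;1;0;1;0];[::0;0;1;2;1];[::2;2;2;1;0]];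
    [::[::2;0;1;1;0];[::0;1;2;2;0];[::0;0;2;2;2];[::2;0;1;2;2];[::0;1;2;2;1];[::2;1;2;1;2];[::0;0;0;0;1];[::2;0;0;1;1];[::0;2;0;0;1];[::1;1;1;1;0];[::0;0;1;0;2]];
    [::[::0;1;2;0;0];[::2;1;1;2;0];[::0;2;2;0;1];[::2;0;2;1;2];[::1;2;1;2;2];[::1;1;2;1;0];[::2;1;0;0;2];[::2;2;1;1;0];[::2;0;1;1;2];[::2;0;2;2;0];[::1;2;1;2;0]];
    [::[::0;1;1;0;1];[::1;2;1;0;1];[::2;0;0;2;0];[::1;0;0;2;0];[::1;0;1;2;2];[::2;0;0;1;2];[::0;1;0;2;1];[::0;0;0;1;0];[::1;0;2;0;1];[::1;1;0;0;0];[::0;1;1;2;1]];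
    [::[::2;2;0;1;1];[::0;2;1;0;1];[::1;1;1;2;2];[::0;2;2;2;2];[::1;1;0;1;2];[::1;0;1;1;2];[::1;2;2;1;1];[::1;0;0;1;1];[::0;0;1;1;0];[::1;0;1;2;0];[::1;2;0;0;0]];
    [::[::2;1;2;2;0];[::2;0;2;0;1];[::1;2;2;0;2];[::0;1;0;1;1];[::0;2;1;0;2];[::0;1;0;0;1];[::1;2;2;0;1];[::1;0;2;1;0];[::1;0;1;0;0];[::0;2;0;1;1];[::1;1;0;1;0]]];
  [::[::[::1;2;2;2;0];[::2;1;0;2;1];[::1;2;1;0;2];[::0;0;0;2;1];[::0;0;2;0;0];[::0;1;0;2;0];[::0;0;0;0;1];[::2;2;1;1;0];[::1;0;2;0;1];[::1;0;1;2;0];[::1;1;0;1;0]];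
    [::[::0;1;2;1;0];[::0;0;0;1;1];[::2;0;1;0;0];[::1;1;0;2;1];[::0;0;2;1;1];[::2;1;2;1;2];[::2;1;0;0;2];[::0;0;0;1;0];[::0;0;1;1;0];[::0;2;0;1;1];[::2;0;1;0;1]];
    [::[::1;1;1;1;2];[::0;1;0;1;0];[::2;1;2;2;2];[::2;1;1;1;1];[::0;1;2;2;1];[::1;1;2;1;0];[::0;1;0;2;1];[::1;0;0;1;1];[::1;0;1;0;0];[::0;0;1;2;0];[::1;2;2;2;1]];
    [::[::0;2;2;2;1];[::1;1;2;0;1];[::2;1;2;2;1];[::2;0;1;2;2];[::1;2;1;2;2];[::2;0;0;1;2];[::1;2;2;1;1];[::1;0;2;1;0];[::1;2;0;2;2];[::2;0;1;1;1];[::2;2;2;1;2]];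
    [::[::1;0;0;1;2];[::0;1;0;0;0];[::0;0;2;2;2];[::2;0;2;1;2];[::1;0;1;2;2];[::1;0;1;1;2];[::1;2;2;0;1];[::2;2;1;2;2];[::1;0;0;0;0];[::2;2;2;0;2];[::1;2;1;0;0]];
    [::[::0;1;2;1;2];[::0;1;2;2;0];[::0;2;2;0;1];[::1;0;0;2;0];[::1;1;0;1;2];[::0;1;0;0;1];[::0;2;2;2;0];[::2;2;0;2;2];[::1;2;2;0;0];[::0;2;1;2;2];[::1;1;1;0;2]];
    [::[::2;0;1;1;0];[::2;1;1;2;0];[::2;0;0;2;0];[::0;2;2;2;2];[::0;2;1;0;2];[::2;2;2;2;2];[::2;2;0;1;0];[::2;2;2;0;0];[::1;1;2;2;1];[::0;1;2;2;2];[::2;2;2;1;0]];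
    [::[::0;1;2;0;0];[::1;2;1;0;1];[::1;1;1;2;2];[::0;1;0;1;1];[::1;1;2;0;0];[::2;2;1;1;1];[::0;0;2;2;1];[::2;0;1;2;1];[::2;1;0;2;2];[::0;0;1;2;1];[::0;0;1;0;2]];
    [::[::0;1;1;0;1];[::0;2;1;0;1];[::1;2;2;0;2];[::0;2;2;0;0];[::1;0;0;0;1];[::2;1;0;1;2];[::1;1;2;0;2];[::0;2;2;1;0];[::2;1;0;1;0];[::1;1;1;1;0];[::1;2;1;2;0]];
    [::[::2;2;0;1;1];[::2;0;2;0;1];[::2;0;2;2;2];[::0;2;0;2;1];[::0;0;2;0;2];[::1;1;0;0;2];[::2;2;0;0;2];[::1;2;0;0;2];[::0;2;0;0;1];[::2;0;2;2;0];[::0;1;1;2;1]];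
    [::[::2;1;2;2;0];[::1;2;0;1;0];[::2;0;0;0;1];[::1;0;1;0;1];[::1;2;2;1;2];[::2;2;1;2;1];[::0;2;2;1;1];[::2;0;0;1;1];[::2;0;1;1;2];[::1;1;0;0;0];[::1;2;0;0;0]]];
  [::[::[::1;2;2;2;0];[::0;0;0;1;1];[::2;1;2;2;2];[::2;0;1;2;2];[::1;0;1;2;2];[::0;1;0;0;1];[::2;2;0;1;0];[::2;0;1;2;1];[::2;1;0;1;0];[::2;0;2;2;0];[::1;2;0;0;0]];
    [::[::0;1;2;1;0];[::0;1;0;1;0];[::2;1;2;2;1];[::2;0;2;1;2];[::1;1;0;1;2];[::2;2;2;2;2];[::0;0;2;2;1];[::0;2;2;1;0];[::0;2;0;0;1];[::1;1;0;0;0];[::1;1;0;1;0]];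
    [::[::1;1;1;1;2];[::1;1;2;0;1];[::0;0;2;2;2];[::1;0;0;2;0];[::0;2;1;0;2];[::2;2;1;1;1];[::1;1;2;0;2];[::1;2;0;0;2];[::2;0;1;1;2];[::1;0;1;2;0];[::2;0;1;0;1]];
    [::[::0;2;2;2;1];[::0;1;0;0;0];[::0;2;2;0;1];[::0;2;2;2;2];[::1;1;2;0;0];[::2;1;0;1;2];[::2;2;0;0;2];[::2;0;0;1;1];[::1;0;2;0;1];[::0;2;0;1;1];[::1;2;2;2;1]];
    [::[::1;0;0;1;2];[::0;1;2;2;0];[::2;0;0;2;0];[::0;1;0;1;1];[::1;0;0;0;1];[::1;1;0;0;2];[::0;2;2;1;1];[::2;2;1;1;0];[::0;0;1;1;0];[::0;0;1;2;0];[::2;2;2;1;2]];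
    [::[::0;1;2;1;2];[::2;1;1;2;0];[::1;1;1;2;2];[::0;2;2;0;0];[::0;0;2;0;2];[::2;2;1;2;1];[::0;0;0;0;1];[::0;0;0;1;0];[::1;0;1;0;0];[::2;0;1;1;1];[::1;2;1;0;0]];
    [::[::2;0;1;1;0];[::1;2;1;0;1];[::1;2;2;0;2];[::0;2;0;2;1];[::1;2;2;1;2];[::0;1;0;2;0];[::2;1;0;0;2];[::1;0;0;1;1];[::1;2;0;2;2];[::2;2;2;0;2];[::1;1;1;0;2]];
    [::[::0;1;2;0;0];[::0;2;1;0;1];[::2;0;2;2;2];[::1;0;1;0;1];[::0;0;2;0;0];[::2;1;2;1;2];[::0;1;0;2;1];[::1;0;2;1;0];[::1;0;0;0;0];[::0;2;1;2;2];[::2;2;2;1;0]];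
    [::[::0;1;1;0;1];[::2;0;2;0;1];[::2;0;0;0;1];[::0;0;0;2;1];[::0;0;2;1;1];[::1;1;2;1;0];[::1;2;2;1;1];[::2;2;1;2;2];[::1;2;2;0;0];[::0;1;2;2;2];[::0;0;1;0;2]];
    [::[::2;2;0;1;1];[::1;2;0;1;0];[::1;2;1;0;2];[::1;1;0;2;1];[::0;1;2;2;1];[::2;0;0;1;2];[::1;2;2;0;1];[::2;2;0;2;2];[::1;1;2;2;1];[::0;0;1;2;1];[::1;2;1;2;0]];
    [::[::2;1;2;2;0];[::2;1;0;2;1];[::2;0;1;0;0];[::2;1;1;1;1];[::1;2;1;2;2];[::1;0;1;1;2];[::0;2;2;2;0];[::2;2;2;0;0];[::2;1;0;2;2];[::1;1;1;1;0];[::0;1;1;2;1]]];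
  [::[::[::1;2;2;2;0];[::1;1;2;0;1];[::2;0;0;2;0];[::0;2;0;2;1];[::0;0;2;1;1];[::1;0;1;1;2];[::0;0;2;2;1];[::2;0;0;1;1];[::1;0;1;0;0];[::0;2;1;2;2];[::1;2;1;2;0]];
    [::[::0;1;2;1;0];[::0;1;0;0;0];[::1;1;1;2;2];[::1;0;1;0;1];[::0;1;2;2;1];[::0;1;0;0;1];[::1;1;2;0;2];[::2;2;1;1;0];[::1;2;0;2;2];[::0;1;2;2;2];[::0;1;1;2;1]];
    [::[::1;1;1;1;2];[::0;1;2;2;0];[::1;2;2;0;2];[::0;0;0;2;1];[::1;2;1;2;2];[::2;2;2;2;2];[::2;2;0;0;2];[::0;0;0;1;0];[::1;0;0;0;0];[::0;0;1;2;1];[::1;2;0;0;0]];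
    [::[::0;2;2;2;1];[::2;1;1;2;0];[::2;0;2;2;2];[::1;1;0;2;1];[::1;0;1;2;2];[::2;2;1;1;1];[::0;2;2;1;1];[::1;0;0;1;1];[::1;2;2;0;0];[::1;1;1;1;0];[::1;1;0;1;0]];
    [::[::1;0;0;1;2];[::1;2;1;0;1];[::2;0;0;0;1];[::2;1;1;1;1];[::1;1;0;1;2];[::2;1;0;1;2];[::0;0;0;0;1];[::1;0;2;1;0];[::1;1;2;2;1];[::2;0;2;2;0];[::2;0;1;0;1]];
    [::[::0;1;2;1;2];[::0;2;1;0;1];[::1;2;1;0;2];[::2;0;1;2;2];[::0;2;1;0;2];[::1;1;0;0;2];[::2;1;0;0;2];[::2;2;1;2;2];[::2;1;0;2;2];[::1;1;0;0;0];[::1;2;2;2;1]];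
    [::[::2;0;1;1;0];[::2;0;2;0;1];[::2;0;1;0;0];[::2;0;2;1;2];[::1;1;2;0;0];[::2;2;1;2;1];[::0;1;0;2;1];[::2;2;0;2;2];[::2;1;0;1;0];[::1;0;1;2;0];[::2;2;2;1;2]];
    [::[::0;1;2;0;0];[::1;2;0;1;0];[::2;1;2;2;2];[::1;0;0;2;0];[::1;0;0;0;1];[::0;1;0;2;0];[::1;2;2;1;1];[::2;2;2;0;0];[::0;2;0;0;1];[::0;2;0;1;1];[::1;2;1;0;0]];
    [::[::0;1;1;0;1];[::2;1;0;2;1];[::2;1;2;2;1];[::0;2;2;2;2];[::0;0;2;0;2];[::2;1;2;1;2];[::1;2;2;0;1];[::2;0;1;2;1];[::2;0;1;1;2];[::0;0;1;2;0];[::1;1;1;0;2]];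
    [::[::2;2;0;1;1];[::0;0;0;1;1];[::0;0;2;2;2];[::0;1;0;1;1];[::1;2;2;1;2];[::1;1;2;1;0];[::0;2;2;2;0];[::0;2;2;1;0];[::1;0;2;0;1];[::2;0;1;1;1];[::2;2;2;1;0]];
    [::[::2;1;2;2;0];[::0;1;0;1;0];[::0;2;2;0;1];[::0;2;2;0;0];[::0;0;2;0;0];[::2;0;0;1;2];[::2;2;0;1;0];[::1;2;0;0;2];[::0;0;1;1;0];[::2;2;2;0;2];[::0;0;1;0;2]]]].


Definition net : seq (seq (seq code)) := map (map (map (map (fun d => d%:R)))) net_digits.

Definition net_class (i : nat) : seq (seq code) := nth [::] net i.

Definition points : seq code := flatten (net_class 0).

Lemma size_net : size net = 9%N.
Proof. by vm_compute. Qed.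

Lemma points_valid : all valid_code points.
Proof. by vm_compute. Qed.

Lemma points0 : nseq 5 0 \notin points.
Proof. by vm_compute. Qed.

Lemma points_half :
  all (fun c => (c == nseq 5 0) || ((c \in points) != (map -%R c \in points))) (all_codes 5).
Proof. by vm_compute. Qed.

Lemma net_blocks : all (all (fun b => (size b == 11%N) && sums_to_zero b)) net.
Proof. by vm_compute. Qed.

Lemma net_parallel : all (fun cl => uniq (flatten cl) && perm_eq (flatten cl) points) net.
Proof. by vm_compute. Qed.

Lemma net_linear :
  all (fun i => all (fun j => all (fun b : seq code => all (fun b' =>
      ((i == j) && (b == b')) || (count (mem b') b <= 1)%N)
    (net_class j)) (net_class i)) (iota 0 9)) (iota 0 9).
Proof. by vm_compute. Qed.

Lemma net_class_in (i : 'I_9) : net_class i \in net.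
Proof. by apply/mem_nth; rewrite size_net. Qed.

Lemma net_class_parallel (i : 'I_9) :
  uniq (flatten (net_class i)) /\ perm_eq (flatten (net_class i)) points.
Proof. exact/andP/(allP net_parallel)/net_class_in. Qed.

Lemma net_block (i : 'I_9) b : b \in net_class i -> size b = 11%N /\ sums_to_zero b.
Proof. by move=> bi; have /andP[/eqP] := allP (allP net_blocks _ (net_class_in i)) b bi. Qed.

Lemma valid_net_code (i : 'I_9) b c : b \in net_class i -> c \in b -> valid_code c.
Proof.
move=> bi cb; apply: (allP points_valid).
by rewrite -(perm_mem (net_class_parallel i).2); apply/flattenP; exists b.
Qed.

Lemma net_meet (i j : 'I_9) b b' c d : b \in net_class i -> b' \in net_class j ->
  (i, b) != (j, b') -> c \in b -> d \in b -> c \in b' -> d \in b' -> c = d.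
Proof.
move=> bi bj neq cb db cb' db'.
have := allP (allP (allP (allP net_linear i _) j _) b bi) b' bj.
rewrite !mem_iota !ltn_ord => /(_ isT isT) /orP[/andP[/eqP ij /eqP bb']|].
  by rewrite bb' (val_inj ij) eqxx in neq.
by move/count_le1_eq; apply.
Qed.

Section AdditiveImage.
Variables (G : finZmodType) (g : 'rV['F_3]_5 -> G).
Hypothesis gD : {morph g : u v / u + v}.
Hypothesis g_bij : bijective g.

Lemma g0 : g 0 = 0.
Proof. by apply: (addrI (g 0)); rewrite -gD !addr0. Qed.

Lemma gN u : g (- u) = - g u.
Proof. by apply: (addrI (g u)); rewrite -gD !subrr g0. Qed.

Local Notation phi c := (g (row_of_code c)).

Lemma phi_inj : {in valid_code &, injective (fun c => phi c)}.
Proof. by move=> c d vc vd /(bij_inj g_bij); apply: row_of_code_inj. Qed.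

Lemma phi_surj x : exists2 c, valid_code c & phi c = x.
Proof.
have [h gK hK] := g_bij; have [c vc ec] := row_of_code_surj (h x).
by exists c; rewrite // ec hK.
Qed.

Lemma mem_map_phi s c : all valid_code s -> valid_code c ->
  (phi c \in [seq phi d | d <- s]) = (c \in s).
Proof.
move=> /allP vs vc; apply/mapP/idP => [[d ds /phi_inj e]|cs]; last by exists c.
by rewrite e //; apply: vs.
Qed.

Local Notation V := [seq phi c | c <- points].
Local Notation cls i := [seq [seq phi c | c <- b] | b <- net_class i].

Lemma image_points_half x : x != 0 -> (x \in V) != (- x \in V).
Proof.
have [c vc <-] := phi_surj x => nx0; rewrite -gN -row_of_codeN.
have vNc : valid_code (map -%R c) by rewrite /valid_code size_map.
rewrite !mem_map_phi ?points_valid //.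
have c5 : c \in all_codes 5 by rewrite -(eqP vc) mem_all_codes.
have /orP[/eqP c0|//] := allP points_half c c5.
by rewrite c0 row_of_code0 g0 eqxx in nx0.
Qed.

Lemma image_meet (i j : 'I_9) B B' x y : B \in cls i -> B' \in cls j ->
  (i, B) != (j, B') -> x \in B -> y \in B -> x \in B' -> y \in B' -> x = y.
Proof.
move=> /mapP[b bi ->] /mapP[b' bj ->] neq.
have {}neq : (i, b) != (j, b') by apply: contraNneq neq => -[-> ->].
have vb' : all valid_code b' by apply/allP => c; apply: valid_net_code bj.
move=> /mapP[c cb ->] /mapP[d db ->].
rewrite !mem_map_phi // ?(valid_net_code bi cb) ?(valid_net_code bi db) // => cb' db'.
by rewrite (net_meet bi bj neq cb db cb' db').
Qed.

Lemma has_heffter_net_additive_image : has_heffter_net G 11 9.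
Proof.
exists [set x in V], (fun i => blocks_of (cls i)).
apply: heffter_net_of_seqs => //.
- by rewrite -(bij_eq_card g_bij) card_mx card_Fp.
- by rewrite -g0 -row_of_code0 mem_map_phi ?points_valid ?points0.
- exact: image_points_half.
- by move=> i _ /mapP[b bi ->]; rewrite size_map (net_block bi).1.
- move=> i _ /mapP[b bi ->].
  by rewrite big_map -(big_morph _ gD g0) sum_row_of_code ?g0 ?(net_block bi).2.
- move=> i; rewrite -map_flatten map_inj_in_uniq ?(net_class_parallel i).1 //.
  by move=> c d /flattenP[b bi cb] /flattenP[b' bi' db']; apply: phi_inj;
    [exact: valid_net_code bi cb | exact: valid_net_code bi' db'].
- by move=> i x; rewrite -map_flatten (perm_mem (perm_map _ (net_class_parallel i).2)).
- exact: image_meet.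
Qed.

End AdditiveImage.

Theorem theorem5p3 (F : finFieldType) (hF : #|F| = (3 ^ 5)%N) :
  has_heffter_net F 11 9.
Proof.
have c3 : (3 \in [pchar F])%N := card_finPcharP hF isT.
have dim5 : logn 3 #|pPrimeCharType c3| = 5%N by rewrite hF.
move: (pprimeChar_vectAxiom c3); rewrite dim5 => -[v2r v2r_lin [g v2rK gK]].
have gD : {morph g : u v / u + v}.
  move=> u v; apply: (can_inj v2rK); rewrite gK.
  by have := v2r_lin 1 (g u) (g v); rewrite !scale1r !gK => <-.
exact: has_heffter_net_additive_image gD (Bijective gK v2rK).
Qed.
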